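(* Let $r\geq 3$. If a graph $G$ of order $n$ contains a complete subgraph $K_{r+1}$ and has minimum degree $$\delta(G)>\left(\frac{r-1}{r}-\frac{1}{r^{2}(r^{2}-1)}\right)n,$$ then $$js^{(2,r+1,2)}(G)>\frac{n^{r-1}}{r^{r+3}}.$$
   Context: All graphs are finite and simple; $\delta(G)$ is the minimum degree. For an integer $r\geq 2$, $js^{(2,r+1,2)}(G)$ is the maximum, over all edges $uv$ of $G$, of the number of $(r+1)$-cliques of $G$ containing both $u$ and $v$ (and $0$ if $G$ has no edges). *)

From mathcomp Require Import all_boot all_order all_algebra.
Set Implicit Arguments. Unset Strict Implicit. Unset Printing Implicit Defensive.

Definition simple_graph (T : finType) (e : rel T) : Prop :=
  symmetric e /\ irreflexive e.

Section Graph.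
Variables (T : finType) (e : rel T).

Definition deg (v : T) : nat := #|[set w | e v w]|.

(* minimum degree delta(G) (for nonempty T; default #|T| for empty T) *)
Definition min_degree : nat := \big[minn/#|T|]_(v : T) deg v.

Definition is_clique (S : {set T}) : bool :=
  [forall x in S, forall y in S, (x != y) ==> e x y].

Definition has_clique (k : nat) : Prop :=
  exists S : {set T}, is_clique S /\ #|S| = k.

Definition cliques_through (k : nat) (u v : T) : nat :=
  #|[set S : {set T} | [&& is_clique S, #|S| == k, u \in S & v \in S]]|.

(* js^{(2,k,2)}(G) : max over edges uv of the number of k-cliques containing
   u and v; 0 if there is no edge. *)
Definition js2 (k : nat) : nat :=
  \max_(p : T * T | e p.1 p.2) cliques_through k p.1 p.2.

End Graph.

From mathcomp Require Import all_boot all_order all_algebra.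
From mathcomp Require Import ring lra zify.
Set Implicit Arguments. Unset Strict Implicit. Unset Printing Implicit Defensive.
Import Order.TTheory GRing.Theory Num.Theory.

(* Let S be an (r+1)-clique and d_S(w) the number of neighbours of w in S.  The
   d_S(w) sum to at least (r+1) delta and their squares to the sum of the codegrees
   of the pairs of S; with (d_S(w) - r + 1) (d_S(w) - r) >= 0 this yields an edge xy
   of S whose common neighbourhood W has at least
   (2 (r-1) (r+1) delta - r (r-1) n) / (r (r+1)) vertices.  A k-clique inside W has
   at least |W| - k (n - delta) common neighbours in W, so the numbers c_k of
   k-cliques in W satisfy (k+1) c_(k+1) >= c_k (|W| - k (n - delta)).  Under the
   degree hypothesis the factor is at least (r - 2 - k) n / r, with a positive
   surplus left at k = r - 2; this gives c_(r-1) > n^(r-1) / r^(r+3), and every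
   (r-1)-clique of W together with x and y is an (r+1)-clique through xy. *)

Lemma card_sum_mem (I : finType) (A : {pred I}) : #|A| = \sum_i (i \in A : nat).
Proof. by rewrite -sum1_card big_mkcond; apply: eq_bigr => i _; case: (i \in A). Qed.

Lemma sum_nat_pred_card (I : finType) (A P : {pred I}) :
  \sum_(i in A) (P i : nat) = #|[set i in A | P i]|.
Proof.
rewrite card_sum_mem big_mkcond; apply: eq_bigr => i _.
by rewrite inE; case: (i \in A).
Qed.

Section CliqueCounting.
Variables (T : finType) (e : rel T).
Hypotheses (e_sym : symmetric e) (e_irr : irreflexive e).

Lemma min_degree_le v : min_degree e <= deg e v.
Proof. by rewrite /min_degree -minEnat; apply: (bigmin_le (T := nat)). Qed.

Lemma is_cliqueP (S : {set T}) :
  reflect {in S &, forall x y, x != y -> e x y} (is_clique e S).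
Proof.
apply: (iffP forall_inP) => [cS x y xS yS|cS x xS].
  by move/forall_inP/(_ y yS)/implyP: (cS x xS).
by apply/forall_inP => y yS; apply/implyP; apply: cS.
Qed.

Lemma clique_setU1 (X : {set T}) w :
  is_clique e X -> {in X, forall x, e x w} -> is_clique e (w |: X).
Proof.
move=> /is_cliqueP cX wX; apply/is_cliqueP => x y.
case/setU1P=> [->|xX] /setU1P[->|yX]; rewrite ?eqxx // => nxy.
- by rewrite e_sym; apply: wX.
- exact: wX.
- exact: cX.
Qed.

Definition nbhd v : {set T} := [set w | e v w].

Definition codegree x y := #|nbhd x :&: nbhd y|.

Definition common_nbhd (X W : {set T}) : {set T} :=
  [set w in W | [forall x in X, e x w]].

Definition cliques_in (W : {set T}) (k : nat) : {set {set T}} :=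
  [set X : {set T} | [&& X \subset W, is_clique e X & #|X| == k]].

Lemma common_nbhdP (X W : {set T}) w :
  reflect (w \in W /\ {in X, forall x, e x w}) (w \in common_nbhd X W).
Proof. by rewrite inE; apply: (iffP andP) => -[wW /forall_inP]. Qed.

Lemma common_nbhd_notin (X W : {set T}) w : w \in common_nbhd X W -> w \notin X.
Proof. by case/common_nbhdP=> _ hw; apply/negP => /hw; rewrite e_irr. Qed.

Lemma card_common_nbhd (X W : {set T}) :
  #|W| <= #|common_nbhd X W| + \sum_(x in X) (#|T| - deg e x).
Proof.
have -> : \sum_(x in X) (#|T| - deg e x) = \sum_w \sum_(x in X) (~~ e x w : nat).
  rewrite exchange_big; apply: eq_bigr => x _.
  rewrite /deg -(cardsC [set w | e x w]) addKn card_sum_mem.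
  by apply: eq_bigr => w _; rewrite !inE.
rewrite !card_sum_mem -big_split leq_sum // => w _.
case: (boolP (w \in common_nbhd X W)) => [_|].
  exact: leq_trans (leq_b1 _) (leq_addr _ _).
case: (boolP (w \in W)) => [wW|//].
rewrite inE wW negb_forall => /existsP[x]; rewrite negb_imply => /andP[xX nexw].
by rewrite (bigD1 x) //= nexw.
Qed.

Lemma card_common_nbhd_min (X W : {set T}) :
  #|W| <= #|common_nbhd X W| + #|X| * (#|T| - min_degree e).
Proof.
apply: leq_trans (card_common_nbhd X W) _; rewrite leq_add2l -sum_nat_const.
by apply: leq_sum => x _; rewrite leq_sub2l // min_degree_le.
Qed.

Lemma card_cliques_extendable (W : {set T}) (k : nat) w :
  #|[set X in cliques_in W k | w \in common_nbhd X W]|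
    <= #|[set Y in cliques_in W k.+1 | w \in Y]|.
Proof.
have inj : {in [set X in cliques_in W k | w \in common_nbhd X W] &,
             injective (fun X => w |: X)}.
  move=> X1 X2 /setIdP[_ /common_nbhd_notin w1] /setIdP[_ /common_nbhd_notin w2] eq12.
  by rewrite -(setU1K w1) -(setU1K w2) eq12.
rewrite -(card_in_imset inj); apply/subset_leq_card/subsetP => _ /imsetP[X + ->].
case/setIdP; rewrite inE => /and3P[XW cX /eqP cardX] wN.
have [wW hw] := common_nbhdP _ _ _ wN.
rewrite !inE eqxx andbT subUset sub1set wW XW clique_setU1 //=.
by rewrite cardsU1 (common_nbhd_notin wN) cardX.
Qed.

Lemma sum_card_common_nbhd_cliques (W : {set T}) (k : nat) :
  \sum_(X in cliques_in W k) #|common_nbhd X W| <= k.+1 * #|cliques_in W k.+1|.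
Proof.
have -> : k.+1 * #|cliques_in W k.+1| = \sum_(Y in cliques_in W k.+1) #|Y|.
  rewrite mulnC -sum_nat_const; apply: eq_bigr => Y.
  by rewrite inE => /and3P[_ _ /eqP].
rewrite (eq_bigr (fun X => \sum_w (w \in common_nbhd X W : nat))) => [|X _];
  last exact: card_sum_mem.
rewrite [leqRHS](eq_bigr (fun Y : {set T} => \sum_w (w \in Y : nat))) => [|Y _];
  last exact: card_sum_mem.
rewrite exchange_big [leqRHS]exchange_big leq_sum // => w _.
by rewrite !sum_nat_pred_card card_cliques_extendable.
Qed.

Lemma cliques_in_recurrence (W : {set T}) (k : nat) :
  #|cliques_in W k| * #|W| <=
    k.+1 * #|cliques_in W k.+1| + #|cliques_in W k| * (k * (#|T| - min_degree e)).
Proof.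
rewrite -sum_nat_const.
apply: (@leq_trans (\sum_(X in cliques_in W k)
                     (#|common_nbhd X W| + k * (#|T| - min_degree e)))).
  apply: leq_sum => X; rewrite inE => /and3P[_ _ /eqP <-].
  exact: card_common_nbhd_min.
by rewrite big_split /= sum_nat_const leq_add2r sum_card_common_nbhd_cliques.
Qed.

Lemma card_cliques_in_common_nbhd u v k : e u v ->
  #|cliques_in (nbhd u :&: nbhd v) k| <= cliques_through e k.+2 u v.
Proof.
move=> euv; set W := nbhd u :&: nbhd v.
have uW : u \notin W by rewrite !inE e_irr.
have vW : v \notin W by rewrite !inE e_irr andbF.
have nuv : u != v by apply: contraTneq euv => ->; rewrite e_irr.
have restrict (X : {set T}) : X \subset W -> (u |: (v |: X)) :&: W = X.
  move=> XW; apply/setP => z; rewrite in_setI !in_setU1.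
  case: (boolP (z \in W)) => zW; last first.
    by rewrite andbF; apply/esym/negbTE; apply: contra zW; apply: (subsetP XW).
  by rewrite andbT (negbTE (memPn uW z zW)) (negbTE (memPn vW z zW)).
have inj : {in cliques_in W k &, injective (fun X => u |: (v |: X))}.
  move=> X1 X2; rewrite !inE => /and3P[X1W _ _] /and3P[X2W _ _] eq12.
  by rewrite -(restrict _ X1W) -(restrict _ X2W) eq12.
rewrite /cliques_through -(card_in_imset inj); apply/subset_leq_card/subsetP.
move=> _ /imsetP[X + ->]; rewrite !inE => /and3P[XW cX /eqP cardX].
have nbX x : x \in X -> e u x /\ e v x by move/(subsetP XW); rewrite !inE => /andP.
have vX : v \notin X by apply: contra vW; apply: (subsetP XW).
have uvX : u \notin v |: X.
  by rewrite in_setU1 negb_or nuv; apply: contra uW; apply: (subsetP XW).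
rewrite cardsU1 uvX cardsU1 vX cardX !eqxx !orbT !andbT.
apply: clique_setU1; first apply: clique_setU1 => // x /nbX[_ evx].
- by rewrite e_sym.
- by move=> x /setU1P[->|/nbX[eux _]]; rewrite e_sym.
Qed.

Definition deg_in (S : {set T}) w := #|[set z in S | e z w]|.

Lemma sum_deg_in (S : {set T}) : \sum_w deg_in S w = \sum_(z in S) deg e z.
Proof.
rewrite (eq_bigr _ (fun w _ => esym (sum_nat_pred_card S (e^~ w)))) exchange_big.
by apply: eq_bigr => z _; rewrite /deg card_sum_mem; apply: eq_bigr => w _; rewrite inE.
Qed.

Lemma sum_deg_in_sqr (S : {set T}) :
  \sum_w deg_in S w ^ 2 = \sum_(z in S) \sum_(z' in S) codegree z z'.
Proof.
rewrite (eq_bigr (fun w => \sum_(z in S) \sum_(z' in S) (e z w * e z' w))); last first.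
  by move=> w _; rewrite /deg_in -sum_nat_pred_card expnS expn1 big_distrlr.
rewrite exchange_big; apply: eq_bigr => z _; rewrite exchange_big; apply: eq_bigr => z' _.
by rewrite /codegree card_sum_mem; apply: eq_bigr => w _; rewrite !inE mulnb.
Qed.

Lemma exists_pair_codegree (S : {set T}) : 1 < #|S| ->
  exists x y, [/\ x \in S, y \in S, x != y &
    \sum_w deg_in S w ^ 2 <= #|S| * (#|S|.-1 * codegree x y) + \sum_w deg_in S w].
Proof.
move=> S_gt1.
pose A := [pred p : T * T | [&& p.1 \in S, p.2 \in S & p.1 != p.2]].
have A_gt0 : 0 < #|A|.
  case/card_gt1P: S_gt1 => x [y [xS yS nxy]].
  by apply/card_gt0P; exists (x, y); rewrite inE /= xS yS nxy.
have [[x y]] := eq_bigmax_cond (fun p => codegree p.1 p.2) A_gt0.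
rewrite inE /= => /and3P[xS yS nxy] maxxy; exists x, y; split => //.
rewrite sum_deg_in_sqr sum_deg_in -sum_nat_const -big_split leq_sum // => z zS.
rewrite (bigD1 z) //= addnC leq_add //; last by rewrite /codegree setIid.
rewrite -maxxy (cardsD1 z S) zS -sum_nat_const.
rewrite [leqRHS](eq_bigl (fun z' => (z' \in S) && (z' != z))) => [|z']; last first.
  by rewrite !inE andbC.
apply: leq_sum => z' /andP[z'S nz'z].
by apply: (leq_bigmax_cond (z, z')); rewrite inE /= zS z'S eq_sym nz'z.
Qed.

(* (d - k) (d - k - 1) >= 0 for natural numbers d and k. *)
Lemma odd_mul_le_sqr_pronic d k : (2 * k + 1) * d <= d ^ 2 + k.+1 * k.
Proof.
by case: (leqP d k) => [/subnK <-|/subnK <-]; set j := (_ - _)%N; nia.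
Qed.

Lemma clique_edge_codegree (S : {set T}) k : is_clique e S -> #|S| = k.+2 ->
  exists x y, [/\ x \in S, y \in S, e x y &
    2 * k * (k.+2 * min_degree e) <= k.+2 * k.+1 * codegree x y + k.+1 * k * #|T|].
Proof.
move=> cS cardS.
have [|x [y [xS yS nxy hsq]]] := @exists_pair_codegree S; first by rewrite cardS.
exists x, y; split => //; first by move/is_cliqueP: cS; apply.
rewrite cardS /= in hsq.
have hlin : (2 * k + 1) * \sum_w deg_in S w <= \sum_w deg_in S w ^ 2 + #|T| * (k.+1 * k).
  rewrite big_distrr -sum_nat_const -big_split leq_sum // => w _.
  exact: odd_mul_le_sqr_pronic.
have hdeg : k.+2 * min_degree e <= \sum_w deg_in S w.
  by rewrite sum_deg_in -cardS -sum_nat_const leq_sum // => z _; apply: min_degree_le.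
nia.
Qed.

End CliqueCounting.

Local Open Scope ring_scope.

Lemma binomial_growth (F : numDomainType) (K : nat) (x : F) (c : nat -> F) :
  0 <= x -> 0 <= c 0 ->
  (forall k, (k < K)%N -> c k * ((K - k)%:R * x) <= k.+1%:R * c k.+1) ->
  forall k, (k <= K)%N -> 'C(K, k)%:R * x ^+ k * c 0 <= c k.
Proof.
move=> x_ge0 c0_ge0 hc; elim=> [_|k IH kK]; first by rewrite bin0 expr0 mulr1 mul1r.
rewrite -(ler_pM2l (ltr0Sn F k)); apply: le_trans (hc k kK).
have -> : k.+1%:R * ('C(K, k.+1)%:R * x ^+ k.+1 * c 0)
          = 'C(K, k)%:R * x ^+ k * c 0 * ((K - k)%:R * x).
  by rewrite !mulrA -natrM mul_bin_left natrM exprSr; ring.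
by apply: ler_wpM2r (IH (ltnW kK)); rewrite mulr_ge0.
Qed.

(* The surplus coefficient left in the common neighbourhood after r - 2 steps. *)
Definition clique_margin (F : fieldType) (r : F) : F :=
  (r ^+ 2 - 2 * r + 2) / (r ^+ 3 * (r ^+ 2 - 1)).

Lemma common_degree_margin (F : realFieldType) (r n d m k : F) :
  3 <= r -> 0 <= n -> 0 <= k -> k <= r - 2 ->
  ((r - 1) / r - 1 / (r ^+ 2 * (r ^+ 2 - 1))) * n <= d ->
  2 * (r - 1) * (r + 1) * d <= r * (r + 1) * m + r * (r - 1) * n ->
  clique_margin r * n + (r - 2 - k) * n / r <= m - k * (n - d).
Proof.
move=> r3 n_ge0 k_ge0 kr hd hm.
have r_neq0 : r != 0 by apply: lt0r_neq0; lra.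
have r1_neq0 : r + 1 != 0 by apply: lt0r_neq0; lra.
have r21_gt0 : 0 < r ^+ 2 - 1 by nra.
set q := r ^+ 2 * (r ^+ 2 - 1) in hd *.
have q_gt0 : 0 < q by rewrite mulr_gt0 ?exprn_gt0 //; lra.
have q_neq0 : q != 0 := lt0r_neq0 q_gt0.
set t := r^-1 + q^-1; set Q := 2 * (r - 1) / r.
set P := (r - 1) * (r + 2) / (r * (r + 1)).
have hs : n - d <= t * n.
  have e1 : (r - 1) / r - 1 / q = 1 - t by rewrite /t; field; rewrite q_neq0 r_neq0.
  by rewrite e1 in hd; lra.
have hP : P * n - Q * (n - d) <= m.
  have -> : P * n - Q * (n - d)
          = (2 * (r - 1) * (r + 1) * d - r * (r - 1) * n) / (r * (r + 1)).
    by rewrite /P /Q; field; rewrite r1_neq0 r_neq0.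
  by rewrite ler_pdivrMr ?mulr_gt0 //; lra.
have hQk : (Q + k) * (n - d) <= (Q + k) * (t * n).
  by apply: ler_wpM2l hs; rewrite addr_ge0 // divr_ge0 //; lra.
have -> : clique_margin r * n + (r - 2 - k) * n / r
          = P * n - (Q + k) * (t * n) - (r - 2 - k) / q * n.
  by rewrite /clique_margin /P /Q /t /q; field; rewrite r_neq0 r1_neq0 lt0r_neq0.
have : 0 <= (r - 2 - k) / q * n by rewrite mulr_ge0 // divr_ge0 ?(ltW q_gt0) //; lra.
lra.
Qed.

Lemma clique_margin_gt (F : realFieldType) (r : F) : 3 <= r ->
  (r - 1) / r ^+ 5 < clique_margin r.
Proof.
move=> r3; have r_gt0 : 0 < r by lra.
rewrite /clique_margin ltr_pdivrMr ?exprn_gt0 // mulrAC.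
rewrite ltr_pdivlMr ?mulr_gt0 ?exprn_gt0 //; last nra.
rewrite -subr_gt0.
have -> : (r ^+ 2 - 2 * r + 2) * r ^+ 5 - (r - 1) * (r ^+ 3 * (r ^+ 2 - 1))
          = r ^+ 3 * (r ^+ 3 * (r - 3) + 3 * r ^+ 2 + r - 1) by ring.
rewrite mulr_gt0 ?exprn_gt0 //.
have : 0 <= r ^+ 3 * (r - 3) by rewrite mulr_ge0 ?exprn_ge0 //; lra.
nra.
Qed.

Lemma clique_count_bound (F : realFieldType) (r : nat) (n d m : F) (c : nat -> F) :
  (3 <= r)%N -> 0 < n ->
  ((r%:R - 1) / r%:R - 1 / (r%:R ^+ 2 * (r%:R ^+ 2 - 1))) * n <= d ->
  2 * (r%:R - 1) * (r%:R + 1) * d <= r%:R * (r%:R + 1) * m + r%:R * (r%:R - 1) * n ->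
  1 <= c 0 -> (forall k, 0 <= c k) ->
  (forall k, c k * (m - k%:R * (n - d)) <= k.+1%:R * c k.+1) ->
  n ^+ (r - 1) / r%:R ^+ (r + 3) < c (r - 1)%N.
Proof.
move=> r3 n_gt0 hd hm c0 c_ge0 hc.
set R : F := r%:R; set cr := clique_margin R.
have R3 : 3 <= R by rewrite (ler_nat _ 3).
have R_neq0 : R != 0 by apply: lt0r_neq0; lra.
have cr_gt0 : 0 < cr.
  by apply: le_lt_trans (clique_margin_gt R3); rewrite divr_ge0 ?exprn_ge0; lra.
have margin k : (k + 2 <= r)%N -> cr * n + (R - 2 - k%:R) * n / R <= m - k%:R * (n - d).
  move=> kr; apply: common_degree_margin => //; first exact: ltW.
  by rewrite lerBrDr /R -(natrD _ k 2) ler_nat.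
have x_ge0 : 0 <= n / R by rewrite divr_ge0 ?ltW //; lra.
have step k : (k < r - 2)%N -> c k * ((r - 2 - k)%:R * (n / R)) <= k.+1%:R * c k.+1.
  move=> kr; apply: le_trans _ (hc k); apply: (ler_wpM2l (c_ge0 k)).
  have k2r : (k + 2 <= r)%N by lia.
  rewrite !natrB ?leq_subRL -/R ?mulrA; try lia.
  by apply: le_trans (margin k k2r); rewrite lerDr mulr_ge0 ?ltW.
have c_rm2_ge : (n / R) ^+ (r - 2) <= c (r - 2)%N.
  have := binomial_growth x_ge0 (le_trans ler01 c0) step (leqnn (r - 2)).
  by rewrite binn mul1r; apply: le_trans; rewrite ler_peMr ?exprn_ge0.
have c_rm1_ge : (n / R) ^+ (r - 2) * (cr * n) <= (R - 1) * c (r - 1)%N.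
  have r1 : (r - 1 = (r - 2).+1)%N by lia.
  have -> : R - 1 = (r - 2).+1%:R by rewrite -r1 natrB //; lia.
  rewrite r1; apply: le_trans _ (hc _); apply: ler_pM => //.
  - exact: exprn_ge0.
  - exact: mulr_ge0 (ltW cr_gt0) (ltW n_gt0).
  have := margin (r - 2)%N; rewrite subnK; last lia.
  by rewrite natrB -/R ?subrr ?mul0r ?addr0 => [/(_ (leqnn r))|]; last lia.
have R1_gt0 : 0 < R - 1 by lra.
rewrite -(ltr_pM2l R1_gt0); apply: lt_le_trans c_rm1_ge.
have -> : n ^+ (r - 1) / R ^+ (r + 3) = (n / R) ^+ (r - 2) * n / R ^+ 5.
  have -> : (r - 1 = (r - 2) + 1)%N by lia.
  have -> : (r + 3 = (r - 2) + 5)%N by lia.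
  by rewrite expr_div_n !exprD expr1; field; rewrite -/R R_neq0 expf_neq0.
have Xn_gt0 : 0 < (n / R) ^+ (r - 2) * n by rewrite mulr_gt0 ?exprn_gt0 ?divr_gt0 //; lra.
rewrite (_ : _ * (_ * n / _) = (n / R) ^+ (r - 2) * n * ((R - 1) / R ^+ 5)); last by ring.
rewrite (_ : _ * (cr * n) = (n / R) ^+ (r - 2) * n * cr); last by ring.
by rewrite ltr_pM2l // clique_margin_gt.
Qed.

Theorem lemma5 (r : nat) (T : finType) (e : rel T) :
  (3 <= r)%N ->
  simple_graph e ->
  has_clique e r.+1 ->
  ((min_degree e)%:R : rat) >
    ((r%:R - 1) / r%:R - 1 / (r%:R ^+ 2 * (r%:R ^+ 2 - 1))) * (#|T|)%:R ->
  ((js2 e r.+1)%:R : rat) > (#|T|)%:R ^+ (r - 1) / r%:R ^+ (r + 3).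
Proof.
move=> r3 [e_sym e_irr] [S [cS cardS]] hdeg.
have r1 : r.+1 = (r - 1).+2 by lia.
have [x [y [_ _ exy hcod]]] := clique_edge_codegree cS (etrans cardS r1).
set W := nbhd e x :&: nbhd e y.
have js2_ge : (#|cliques_in e W (r - 1)| <= js2 e r.+1)%N.
  rewrite r1; apply: leq_trans (card_cliques_in_common_nbhd e_sym e_irr _ exy) _.
  exact: (leq_bigmax_cond (x, y)).
apply: lt_le_trans (_ : _ < (#|cliques_in e W (r - 1)|)%:R) _; last by rewrite ler_nat.
apply: (clique_count_bound (d := (min_degree e)%:R) (m := #|W|%:R)
          (c := fun k => (#|cliques_in e W k|)%:R)) => //.
- by rewrite ltr0n; apply: leq_trans (max_card S); rewrite cardS.
- exact: ltW.
- move: hcod; rewrite -r1 (_ : (r - 1).+1 = r); last lia.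
  rewrite -(ler_nat rat) !natrD !natrM natrB ?mulrSr /codegree -/W; last lia.
  lra.
- rewrite ler1n; apply/card_gt0P; exists set0.
  by rewrite inE sub0set cards0 eqxx andbT; apply/is_cliqueP => z; rewrite inE.
- move=> k; have := cliques_in_recurrence e_sym e_irr W k.
  rewrite -(ler_nat rat) !natrD !natrM natrB; first lra.
  exact: leq_trans (min_degree_le e x) (max_card _).
Qed.
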